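(* Let $\alpha>0$, $A\ge0$, $B>0$, $t>0$, and let $P_n(x,t)$ be the monic polynomials orthogonal on $[0,\infty)$ w.r.t. $w(x,t)=x^\alpha e^{-x}(A+B\theta(x-t))$, with norms $h_n(t)$ and recurrence $zP_n=P_{n+1}+\alpha_nP_n+\beta_nP_{n-1}$, $\beta_n=h_n/h_{n-1}$. Let $R_n(t)=Bt^\alpha e^{-t}\{P_n(t,t)\}^2/h_n(t)$ and $r_n(t)=Bt^\alpha e^{-t}P_n(t,t)P_{n-1}(t,t)/h_{n-1}(t)$. Then for fixed $t$ and $n\ge1$: $$r_n^2=\beta_nR_nR_{n-1},$$ $$(n+r_n)(n+\alpha+r_n)=\beta_n(1-R_n)(1-R_{n-1}),$$ $$\sum_{j=0}^{n-1}R_j+r_n\left[1-\frac{\alpha}{t}-\frac{2(n+r_n)}{t}\right]=\frac{\beta_n}{t}\left[(1-R_n)R_{n-1}+(1-R_{n-1})R_n\right].$$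
   Context: $\theta$ is the Heaviside function ($1$ for $x>0$, $0$ otherwise); $P_n(t,t)$ is $P_n(x,t)$ at $x=t$. *)

From Stdlib Require Import Reals.
From Coquelicot Require Import Coquelicot.
Open Scope R_scope.

Definition theta (x : R) : R := if Rlt_dec 0 x then 1 else 0.

Definition rpow (x a : R) : R := if Rlt_dec 0 x then Rpower x a else 0.

Definition weight (alpha A B t x : R) : R :=
  rpow x alpha * exp (- x) * (A + B * theta (x - t)).

Fixpoint lsum (f : nat -> R) (n : nat) : R :=
  match n with O => 0 | S m => lsum f m + f m end.

Definition monicP (c : nat -> nat -> R) (n : nat) (x : R) : R :=
  x ^ n + lsum (fun k => c n k * x ^ k) n.

Definition orthonormed (alpha A B t : R) (c : nat -> nat -> R) (h : nat -> R) : Prop :=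
  forall n m : nat,
    is_RInt_gen (fun x => monicP c n x * monicP c m x * weight alpha A B t x)
      (at_point 0) (Rbar_locally p_infty)
      (if Nat.eqb n m then h n else 0).

Definition betan (h : nat -> R) (n : nat) : R := h n / h (n - 1)%nat.

Definition RR_n (alpha B t : R) (c : nat -> nat -> R) (h : nat -> R) (n : nat) : R :=
  B * rpow t alpha * exp (- t) * (monicP c n t) ^ 2 / h n.

Definition rr_n (alpha B t : R) (c : nat -> nat -> R) (h : nat -> R) (n : nat) : R :=
  B * rpow t alpha * exp (- t) * monicP c n t * monicP c (n - 1)%nat t / h (n - 1)%nat.

From Pilot Require Import Defs.
From Stdlib Require Import Reals Lra Lia.
From Coquelicot Require Import Coquelicot.
Open Scope R_scope.

(* Integration by parts turns the moments [mu k] of the weight into a linear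
   functional [L] on polynomials with
     L (X p') = L (X p) - (alpha + 1) L p - t W p(t),   W = B t^alpha e^(-t),
   the last term coming from the jump of the weight at [t].  Applied to
   [P_n ^ 2] and [P_n P_(n-1)], together with orthogonality, it expresses the
   subleading coefficient of [P_n] through [sum_(j<n) R_j] and relates it to
   [h_n - t W P_n(t) P_(n-1)(t)].  The functional
   [N p = L p - L p' - W p(t)] factors on products [P_i P_j], and comparing
   [N (P_n P_(n-1))] with [N (P_n ^ 2)] and [N (P_(n-1) ^ 2)] yields a quadratic
   relation.  The three stated identities are algebraic consequences of these
   two relations. *)

Lemma rpow_nonpos x a : x <= 0 -> rpow x a = 0.
Proof. intros H; unfold rpow; destruct (Rlt_dec 0 x); lra. Qed.

Lemma rpow_pos x a : 0 < x -> rpow x a = Rpower x a.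
Proof. intros H; unfold rpow; destruct (Rlt_dec 0 x); lra. Qed.

Lemma rpow_ge0 x a : 0 <= rpow x a.
Proof.
unfold rpow; destruct (Rlt_dec 0 x); [left; apply exp_pos | lra].
Qed.

Lemma rpow_add_nat x a k : rpow x (a + INR k) = x ^ k * rpow x a.
Proof.
destruct (Rlt_dec 0 x) as [H|H].
- rewrite !rpow_pos by lra. rewrite Rpower_plus, Rpower_pow by lra. ring.
- rewrite !rpow_nonpos by lra. ring.
Qed.

Lemma rpow_small a eps : 0 < a -> 0 < eps ->
  exists d, 0 < d /\ forall y, Rabs y < d -> Rabs (rpow y a) < eps.
Proof.
intros Ha He. exists (Rpower eps (/ a)). split; [apply exp_pos|].
intros y Hy. destruct (Rlt_dec 0 y) as [Hy0|Hy0].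
- rewrite rpow_pos by lra. rewrite Rabs_pos_eq in Hy by lra.
  rewrite Rabs_pos_eq by (left; apply exp_pos).
  apply Rlt_le_trans with (Rpower (Rpower eps (/ a)) a).
  + apply Rlt_Rpower_l; lra.
  + rewrite Rpower_mult, Rinv_l, Rpower_1; lra.
- rewrite rpow_nonpos, Rabs_R0; lra.
Qed.

Lemma rpow_locally_neg a x : x < 0 -> locally x (fun y => 0 = rpow y a).
Proof.
intros Hx. apply (locally_interval _ x m_infty 0); simpl; auto.
intros y _ Hy; rewrite rpow_nonpos; lra.
Qed.

Lemma is_derive_rpow_pos a x : 0 < x -> is_derive (fun y => rpow y a) x (a * rpow x (a - 1)).
Proof.
intros Hx. rewrite rpow_pos by lra.
apply (is_derive_ext_loc (fun y => Rpower y a)).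
- apply (locally_interval _ x 0 p_infty); simpl; auto.
  intros y Hy _; rewrite rpow_pos; auto.
- apply is_derive_Reals, derivable_pt_lim_power; auto.
Qed.

Lemma continuous_rpow a x : 0 < a -> continuous (fun y => rpow y a) x.
Proof.
intros Ha. destruct (Rtotal_order x 0) as [Hx|[Hx|Hx]].
- apply (continuous_ext_loc _ (fun _ => 0)).
  + apply rpow_locally_neg; auto.
  + apply continuous_const.
- subst x. apply continuity_pt_filterlim.
  intros eps He. destruct (rpow_small a eps Ha He) as [d [Hd H]].
  exists d; split; auto. intros y [_ Hy].
  simpl in *. unfold R_dist in *. rewrite (rpow_nonpos 0) by lra.
  rewrite Rminus_0_r in *. auto.
- apply (ex_derive_continuous (K := R_AbsRing) (V := R_NormedModule)).
  eexists. apply is_derive_rpow_pos; auto.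
Qed.

(* For [a > 1] the one-sided difference quotient of [rpow _ a] at [0] is
   [rpow y (a - 1)], so the derivative extends by [0] to the whole line. *)
Lemma is_derive_rpow a x : 1 < a -> is_derive (fun y => rpow y a) x (a * rpow x (a - 1)).
Proof.
intros Ha. destruct (Rtotal_order x 0) as [Hx|[Hx|Hx]].
- rewrite rpow_nonpos, Rmult_0_r by lra.
  apply (is_derive_ext_loc (fun _ => 0)).
  + apply rpow_locally_neg; auto.
  + apply (is_derive_const (K := R_AbsRing) (V := R_NormedModule) 0).
- subst x. rewrite rpow_nonpos, Rmult_0_r by lra.
  apply is_derive_Reals. intros eps He.
  destruct (rpow_small (a - 1) eps ltac:(lra) He) as [d [Hd H]].
  exists (mkposreal d Hd). intros y Hy0 Hyd. simpl in Hyd.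
  rewrite Rplus_0_l, (rpow_nonpos 0) by lra.
  destruct (Rlt_dec 0 y) as [Hy|Hy].
  + replace ((rpow y a - 0) / y - 0) with (rpow y (a - 1)); auto.
    rewrite !rpow_pos by lra.
    replace a with (a - 1 + 1) at 2 by ring.
    rewrite Rpower_plus, Rpower_1 by lra. field; lra.
  + rewrite rpow_nonpos by lra. replace ((0 - 0) / y - 0) with 0 by (field; lra).
    rewrite Rabs_R0; lra.
- apply is_derive_rpow_pos; auto.
Qed.

Lemma exp_ge_pow_div_fact x N : 0 <= x -> x ^ S N / INR (Factorial.fact (S N)) <= exp x.
Proof.
intros Hx. eapply Rle_trans; [|apply (exp_ge_taylor x (S N) Hx)].
rewrite tech5.
assert (0 <= sum_f_R0 (fun k => x ^ k / INR (Factorial.fact k)) N); [|lra].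
apply cond_pos_sum. intros n. apply Rmult_le_pos; [apply pow_le; auto|].
left; apply Rinv_0_lt_compat, INR_fact_lt_0.
Qed.

Lemma rpow_mul_exp_opp_lim a :
  filterlim (fun x => rpow x a * exp (- x)) (Rbar_locally p_infty) (locally 0).
Proof.
destruct (INR_archimed 1 a ltac:(lra)) as [N HN]. rewrite Rmult_1_r in HN.
set (F := INR (Factorial.fact (S N))).
assert (HF : 0 < F) by apply INR_fact_lt_0.
apply filterlim_locally. intros eps.
exists (Rmax 1 (F / eps)). intros x Hx.
assert (H1 : 1 < x) by (eapply Rle_lt_trans; [apply Rmax_l|apply Hx]).
assert (H2 : F / eps < x) by (eapply Rle_lt_trans; [apply Rmax_r|apply Hx]).
apply Rlt_div_l in H2; [|apply cond_pos].
assert (Hr : rpow x a <= x ^ N).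
{ rewrite rpow_pos, <- Rpower_pow by lra. apply Rle_Rpower; lra. }
assert (He := exp_ge_pow_div_fact x N ltac:(lra)). fold F in He.
assert (Hxn : 0 < x ^ N) by (apply pow_lt; lra).
assert (Hex := exp_pos x).
assert (Hr0 := rpow_ge0 x a).
unfold ball; simpl; unfold AbsRing_ball, abs, minus, plus, opp; simpl.
rewrite Ropp_0, Rplus_0_r, exp_Ropp.
rewrite Rabs_pos_eq by (apply Rmult_le_pos; [auto|left; apply Rinv_0_lt_compat; auto]).
apply Rle_lt_trans with (x ^ N / exp x).
{ apply Rmult_le_compat_r; [left; apply Rinv_0_lt_compat|]; auto. }
apply Rle_lt_trans with (x ^ N / (x ^ S N / F)).
{ apply Rmult_le_compat_l; [lra|]. apply Rinv_le_contravar; auto.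
  apply Rdiv_lt_0_compat; auto. apply pow_lt; lra. }
replace (x ^ N / (x ^ S N / F)) with (F / x) by (simpl; field; lra).
apply Rlt_div_l; lra.
Qed.

Lemma theta_pos x : 0 < x -> theta x = 1.
Proof. intros; unfold theta; destruct (Rlt_dec 0 x); lra. Qed.

Lemma theta_nonpos x : x <= 0 -> theta x = 0.
Proof. intros; unfold theta; destruct (Rlt_dec 0 x); lra. Qed.

(* Integration by parts against the step [A + B theta (x - t)]: the boundary
   terms at [0] and [+oo] vanish and only the jump at [t] survives. *)
Lemma is_RInt_gen_derive_step (G g : R -> R) A B t : 0 <= t ->
  (forall x, is_derive G x (g x)) -> (forall x, continuous g x) ->
  G 0 = 0 -> filterlim G (Rbar_locally p_infty) (locally 0) ->
  is_RInt_gen (fun x => g x * (A + B * theta (x - t)))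
    (at_point 0) (Rbar_locally p_infty) (- B * G t).
Proof.
intros Ht HG Hg HG0 HGinf.
assert (Hleft : is_RInt (fun x => g x * (A + B * theta (x - t))) 0 t (A * G t)).
{ apply (is_RInt_ext (fun x => scal A (g x))).
  - intros x Hx. rewrite Rmin_left, Rmax_right in Hx by lra.
    rewrite theta_nonpos by lra. unfold scal; simpl; unfold mult; simpl; ring.
  - replace (A * G t) with (scal A (minus (G t) (G 0))).
    + apply (is_RInt_scal (V := R_NormedModule)).
      exact (is_RInt_derive G g 0 t (fun x _ => HG x) (fun x _ => Hg x)).
    + rewrite HG0. unfold scal, minus, plus, opp; simpl; unfold mult; simpl; ring. }
assert (HDG : is_RInt_gen (Derive G) (at_point t) (Rbar_locally p_infty) (0 - G t)).
{ apply is_RInt_gen_Derive.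
  - apply filter_forall. intros ab x _. eexists; apply HG.
  - apply filter_forall. intros ab x _.
    apply (continuous_ext g); auto. intros y; symmetry; apply is_derive_unique, HG.
  - intros P HP. exact (locally_singleton _ _ HP).
  - exact HGinf. }
assert (Hright : is_RInt_gen (fun x => g x * (A + B * theta (x - t)))
                   (at_point t) (Rbar_locally p_infty) ((A + B) * (0 - G t))).
{ apply (is_RInt_gen_ext (fun x => scal (A + B) (Derive G x))).
  - apply Filter_prod with (fun a => a = t) (fun b => t < b).
    + reflexivity.
    + exists t. auto.
    + intros a b Ha Hb x Hx. simpl in Hx. subst a.
      rewrite Rmin_left, Rmax_right in Hx by lra.
      rewrite theta_pos, (is_derive_unique _ _ _ (HG x)) by lra.
      unfold scal; simpl; unfold mult; simpl; ring.
  - exact (is_RInt_gen_scal _ (A + B) _ HDG). }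
pose proof (is_RInt_gen_Chasles _ t _ _ (proj2 (is_RInt_gen_at_point _ _ _ _) Hleft) Hright) as H.
replace (- B * G t) with (plus (A * G t) ((A + B) * (0 - G t))); auto.
unfold plus; simpl; ring.
Qed.

Lemma moment_recurrence alpha A B t k m m' : 0 < alpha -> 0 < t ->
  is_RInt_gen (fun x => x ^ k * weight alpha A B t x) (at_point 0) (Rbar_locally p_infty) m ->
  is_RInt_gen (fun x => x ^ S k * weight alpha A B t x) (at_point 0) (Rbar_locally p_infty) m' ->
  m' = (INR k + alpha + 1) * m + B * rpow t alpha * exp (- t) * t ^ S k.
Proof.
intros Ha Ht Hm Hm'.
set (a := alpha + INR (S k)).
assert (Ha1 : 1 < a) by (unfold a; rewrite S_INR; generalize (pos_INR k); lra).
set (G := fun x => rpow x a * exp (- x)).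
set (g := fun x => (a * rpow x (a - 1) - rpow x a) * exp (- x)).
assert (HG : forall x, is_derive G x (g x)).
{ intros x. unfold G, g.
  replace ((a * rpow x (a - 1) - rpow x a) * exp (- x))
    with (a * rpow x (a - 1) * exp (- x) + rpow x a * (- exp (- x))) by ring.
  apply (is_derive_mult (fun y => rpow y a) (fun y => exp (- y))).
  - apply is_derive_rpow; auto.
  - auto_derive; [auto|ring].
  - intros; apply Rmult_comm. }
assert (Hg : forall x, continuous g x).
{ intros x. unfold g.
  apply (continuous_mult (fun y => a * rpow y (a - 1) - rpow y a) (fun y => exp (- y))).
  - apply (continuous_minus (fun y => a * rpow y (a - 1)) (fun y => rpow y a)).
    + apply (continuous_mult (fun _ => a)); [apply continuous_const|].
      apply continuous_rpow; lra.
    + apply continuous_rpow; lra.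
  - apply (ex_derive_continuous (K := R_AbsRing) (V := R_NormedModule)).
    auto_derive; auto. }
pose proof (is_RInt_gen_derive_step G g A B t ltac:(lra) HG Hg
  ltac:(unfold G; rewrite rpow_nonpos; lra) (rpow_mul_exp_opp_lim a)) as Hstep.
assert (Hdiff : is_RInt_gen (fun x => g x * (A + B * theta (x - t)))
                  (at_point 0) (Rbar_locally p_infty) ((INR k + alpha + 1) * m - m')).
{ apply (is_RInt_gen_ext (fun x => (INR k + alpha + 1) * (x ^ k * weight alpha A B t x)
                                    - x ^ S k * weight alpha A B t x)).
  - apply filter_forall. intros _ x _. unfold g, weight, a.
    replace (alpha + INR (S k) - 1) with (alpha + INR k) by (rewrite S_INR; ring).
    rewrite !rpow_add_nat, S_INR. simpl; ring.
  - apply (is_RInt_gen_minus (V := R_NormedModule)); auto.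
    apply (is_RInt_gen_scal (V := R_NormedModule)); auto. }
pose proof (is_RInt_gen_unique _ _ Hstep) as E1.
rewrite (is_RInt_gen_unique _ _ Hdiff) in E1.
unfold G, a in E1. rewrite rpow_add_nat in E1. lra.
Qed.

Lemma is_RInt_gen_ge (f : R -> R) l m M :
  is_RInt_gen f (at_point 0) (Rbar_locally p_infty) l ->
  (forall b y, M < b -> is_RInt f 0 b y -> m <= y) -> m <= l.
Proof.
intros H Hb. destruct (Rle_or_lt m l) as [|Hlt]; auto. exfalso.
destruct (H (ball l (mkposreal (m - l) ltac:(lra))) (locally_ball _ _))
  as [Q R0 HQ [M' HM'] HP].
set (b := Rmax M M' + 1).
destruct (HP 0 b HQ (HM' b ltac:(unfold b; generalize (Rmax_r M M'); lra)))
  as [y [Hy Hball]].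
specialize (Hb b y ltac:(unfold b; generalize (Rmax_l M M'); lra) Hy).
unfold ball in Hball; simpl in Hball;
  unfold AbsRing_ball, abs, minus, plus, opp in Hball; simpl in Hball.
apply Rabs_lt_between' in Hball. lra.
Qed.

Lemma is_RInt_gen_gt0 (f : R -> R) a m l : 0 <= a -> 0 < m ->
  (forall x, 0 <= f x) -> (forall x, a <= x <= a + 1 -> m <= f x) ->
  is_RInt_gen f (at_point 0) (Rbar_locally p_infty) l -> 0 < l.
Proof.
intros Ha Hm Hf0 Hfm H.
apply Rlt_le_trans with m; auto.
apply (is_RInt_gen_ge f l m (a + 1) H). intros b y Hb Hy.
assert (HE : ex_RInt f 0 b) by (exists y; auto).
rewrite <- (is_RInt_unique _ _ _ _ Hy).
assert (E1 : ex_RInt f 0 a) by (apply (ex_RInt_Chasles_1 f 0 a b); auto; lra).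
assert (E2 : ex_RInt f a b) by (apply (ex_RInt_Chasles_2 f 0 a b); auto; lra).
assert (E3 : ex_RInt f a (a + 1)) by (apply (ex_RInt_Chasles_1 f a (a + 1) b); auto; lra).
assert (E4 : ex_RInt f (a + 1) b) by (apply (ex_RInt_Chasles_2 f a (a + 1) b); auto; lra).
rewrite <- (RInt_Chasles _ _ a _ E1 E2), <- (RInt_Chasles _ _ (a + 1) _ E3 E4).
assert (I1 : 0 <= RInt f 0 a) by (apply RInt_ge_0; auto; lra).
assert (I2 : 0 <= RInt f (a + 1) b) by (apply RInt_ge_0; auto; lra).
assert (I3 : RInt (fun _ => m) a (a + 1) <= RInt f a (a + 1)).
{ apply RInt_le; auto; [lra|apply ex_RInt_const|]. intros x Hx; apply Hfm; lra. }
rewrite RInt_const in I3. unfold scal in I3; simpl in I3; unfold mult in I3; simpl in I3.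
unfold plus; simpl. nra.
Qed.

Lemma lsum_ge0 (f : nat -> R) n : (forall k, 0 <= f k) -> 0 <= lsum f n.
Proof. intros H; induction n; simpl; [lra | specialize (H n); lra]. Qed.

Lemma Rabs_lsum_pow_le (c : nat -> R) x N m : 1 <= x -> (m <= S N)%nat ->
  Rabs (lsum (fun k => c k * x ^ k) m) <= lsum (fun k => Rabs (c k)) m * x ^ N.
Proof.
intros Hx. induction m as [|m IH]; intros Hm; simpl.
- rewrite Rabs_R0; lra.
- eapply Rle_trans; [apply Rabs_triang|].
  assert (Hp : x ^ m <= x ^ N) by (apply Rle_pow; auto; lia).
  rewrite Rabs_mult, (Rabs_pos_eq (x ^ m)) by (apply pow_le; lra).
  specialize (IH ltac:(lia)).
  assert (0 <= Rabs (c m)) by apply Rabs_pos.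
  rewrite Rmult_plus_distr_r.
  apply Rplus_le_compat; auto. apply Rmult_le_compat_l; auto.
Qed.

Lemma monicP_ge1 c n x : 1 + lsum (fun k => Rabs (c n k)) n <= x -> 1 <= monicP c n x.
Proof.
intros Hx. unfold monicP. destruct n as [|N]; [simpl; lra|].
set (S0 := lsum (fun k => Rabs (c (S N) k)) (S N)) in *.
assert (HS : 0 <= S0) by (apply lsum_ge0; intros; apply Rabs_pos).
pose proof (Rabs_lsum_pow_le (c (S N)) x N (S N) ltac:(lra) (le_n _)) as Hb.
fold S0 in Hb. apply Rabs_le_between in Hb.
pose proof (pow_R1_Rle x N ltac:(lra)).
assert (0 <= (x - S0 - 1) * x ^ N) by (apply Rmult_le_pos; lra).
change (x ^ S N) with (x * x ^ N). nra.
Qed.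

Lemma weight_ge0 alpha A B t x : 0 <= A -> 0 <= B -> 0 <= weight alpha A B t x.
Proof.
intros HA HB. unfold weight, theta.
assert (H := rpow_ge0 x alpha). assert (H' := exp_pos (- x)).
destruct (Rlt_dec 0 (x - t)); apply Rmult_le_pos; nra.
Qed.

(* Far to the right [P_n >= 1], [x ^ alpha >= 1] and [theta = 1], so the
   integrand is bounded below on a unit interval. *)
Lemma sqr_norm_pos alpha A B t c n l : 0 <= alpha -> 0 <= A -> 0 < B ->
  is_RInt_gen (fun x => monicP c n x * monicP c n x * weight alpha A B t x)
    (at_point 0) (Rbar_locally p_infty) l -> 0 < l.
Proof.
intros Ha HA HB.
set (T := Rmax (1 + lsum (fun k => Rabs (c n k)) n) (Rmax 0 t + 1)).
assert (HT1 := Rmax_l (1 + lsum (fun k => Rabs (c n k)) n) (Rmax 0 t + 1)).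
assert (HT2 := Rmax_r (1 + lsum (fun k => Rabs (c n k)) n) (Rmax 0 t + 1)).
assert (HT3 := Rmax_l 0 t). assert (HT4 := Rmax_r 0 t). fold T in HT1, HT2.
apply (is_RInt_gen_gt0 _ T (B * exp (- (T + 1)))); [lra|..].
- apply Rmult_lt_0_compat; [lra|apply exp_pos].
- intros x. apply Rmult_le_pos; [apply Rle_0_sqr|apply weight_ge0; lra].
- intros x Hx. unfold weight. rewrite theta_pos by lra.
  assert (HP := monicP_ge1 c n x ltac:(lra)).
  assert (Hr : 1 <= rpow x alpha).
  { rewrite rpow_pos by lra. rewrite <- (Rpower_O x) by lra. apply Rle_Rpower; lra. }
  assert (He : exp (- (T + 1)) <= exp (- x)).
  { destruct (Req_dec x (T + 1)) as [->|Hne]; [lra|]. left; apply exp_increasing; lra. }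
  assert (He0 := exp_pos (- (T + 1))).
  assert (1 <= monicP c n x * monicP c n x) by nra.
  assert (exp (- (T + 1)) <= rpow x alpha * exp (- x)) by nra.
  assert (B * exp (- (T + 1)) <= rpow x alpha * exp (- x) * (A + B * 1)) by nra.
  assert (0 <= rpow x alpha * exp (- x) * (A + B * 1)) by nra.
  nra.
Qed.

(* MathComp is imported only inside this module: its notations (e.g. [<=] on
   [nat]) would otherwise change the meaning of the statement of [lemma7]. *)
Module MomentFunctional.
From mathcomp Require Import all_boot all_algebra Rstruct ring.
Import GRing.Theory.
Set Implicit Arguments.
Unset Strict Implicit.
Local Open Scope ring_scope.

Section Functional.
Variable mu : nat -> R.

Definition L (p : {poly R}) : R := \sum_(i < size p) p`_i * mu i.

Lemma L_widen N (p : {poly R}) : (size p <= N)%N -> L p = \sum_(i < N) p`_i * mu i.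
Proof.
move=> hN; rewrite /L (big_ord_widen N (fun i => p`_i * mu i)) // big_mkcond.
apply: eq_bigr => i _; case: ifP => // /negbT.
by rewrite -leqNgt => /(nth_default 0) ->; rewrite mul0r.
Qed.

Lemma LD (p q : {poly R}) : L (p + q) = L p + L q.
Proof.
set N := maxn (size p) (size q).
rewrite (L_widen (size_polyD p q)) (@L_widen N p) ?leq_maxl // (@L_widen N q) ?leq_maxr //.
by rewrite -big_split; apply: eq_bigr => i _; rewrite coefD mulrDl.
Qed.

Lemma LZ a (p : {poly R}) : L (a *: p) = a * L p.
Proof.
rewrite (L_widen (size_scale_leq a p)) /L mulr_sumr.
by apply: eq_bigr => i _; rewrite coefZ mulrA.
Qed.

Lemma L0 : L 0 = 0.
Proof. by rewrite /L size_poly0 big_ord0. Qed.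

Lemma LXn k : L 'X^k = mu k.
Proof.
rewrite /L size_polyXn big_ord_recr /= big1 ?add0r; first by rewrite coefXn eqxx mul1r.
by move=> i _; rewrite coefXn (ltn_eqF (ltn_ord i)) mul0r.
Qed.

Variables (alpha t W : R).
Hypothesis mu_succ : forall k, mu k.+1 = (k%:R + alpha + 1) * mu k + W * t ^+ k.+1.

Lemma L_X_deriv (p : {poly R}) :
  L ('X * p^`()) = L ('X * p) - (alpha + 1) * L p - t * W * p.[t].
Proof.
rewrite -[p]coefK poly_def; elim: (size p) => [|n IH].
  by rewrite big_ord0 deriv0 mulr0 L0 horner0; ring.
rewrite big_ord_recr /= derivD !mulrDr !LD hornerD IH derivZ derivXn -!scalerAr !LZ.
rewrite hornerZ hornerXn -exprS LXn; case: n {IH} => [|n] /=.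
  by rewrite mulr0n mulr0 L0 LXn mu_succ expr1; ring.
by rewrite mulrnAr -exprS -scaler_nat LZ !LXn (mu_succ n.+1) exprS; ring.
Qed.

Definition P (c : nat -> nat -> R) n : {poly R} := 'X^n + \poly_(k < n) c n k.

Section Orthogonality.
Variables (c : nat -> nat -> R) (h : nat -> R).
Local Notation P := (P c).
Hypothesis L_P_mul_P : forall n m, L (P n * P m) = if n == m then h n else 0.

Lemma size_P n : size (P n) = n.+1.
Proof.
rewrite /P size_polyDl size_polyXn //.
exact: leq_ltn_trans (size_poly _ _) _.
Qed.

Lemma coef_P n i : (P n)`_i = if (i < n)%N then c n i else (i == n)%:R.
Proof.
rewrite /P coefD coefXn coef_poly.
by case: ltnP => hi; [rewrite (ltn_eqF hi) add0r | rewrite addr0].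
Qed.

Lemma coef_P_diag n : (P n)`_n = 1.
Proof. by rewrite coef_P ltnn eqxx. Qed.

Lemma size_deriv_P n : (size (P n)^`() <= n)%N.
Proof.
apply/leq_sizeP => j hj; rewrite coef_deriv coef_P.
by rewrite ltnNge (leqW hj) /= (gtn_eqF (hj : (n < j.+1)%N)) mul0rn.
Qed.

Lemma size_leq_pred (p : {poly R}) m : (size p <= m.+1)%N -> p`_m = 0 -> (size p <= m)%N.
Proof.
move=> hs hm; apply/leq_sizeP => j; rewrite leq_eqVlt => /orP[/eqP <- //|hj].
by move/leq_sizeP: hs; apply.
Qed.

Lemma size_XM_leq (q : {poly R}) k : (size q <= k)%N -> (size ('X * q)%R <= k.+1)%N.
Proof.
move=> hq; apply/leq_sizeP => -[//|j] hj; rewrite coefXM /=.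
by move/leq_sizeP: hq; apply.
Qed.

Lemma size_sub_P (q : {poly R}) m : (size q <= m.+1)%N -> (size (q - q`_m *: P m)%R <= m)%N.
Proof.
move=> hq; apply: size_leq_pred; last by rewrite coefB coefZ coef_P_diag mulr1 subrr.
apply: leq_trans (size_polyD _ _) _; rewrite geq_max hq size_polyN.
by rewrite (leq_trans (size_scale_leq _ _)) // size_P.
Qed.

Lemma L_P_mul_small m (q : {poly R}) n : (size q <= m)%N -> (m <= n)%N -> L (P n * q) = 0.
Proof.
elim: m q => [|m IH] q hq hn.
  by move: hq; rewrite size_poly_leq0 => /eqP ->; rewrite mulr0 L0.
rewrite -[q](subrK (q`_m *: P m)) mulrDr LD -scalerAr LZ L_P_mul_P.
by rewrite (IH _ (size_sub_P hq) (ltnW hn)) (gtn_eqF hn) mulr0 addr0.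
Qed.

Lemma L_P_mul n (q : {poly R}) : (size q <= n.+1)%N -> L (P n * q) = q`_n * h n.
Proof.
move=> hq; rewrite -[q](subrK (q`_n *: P n)) mulrDr LD -scalerAr LZ L_P_mul_P eqxx.
by rewrite (L_P_mul_small (size_sub_P hq)) // add0r coefD coefB coefZ coef_P_diag mulr1 subrK.
Qed.

Lemma coef_XP_deriv n : ('X * (P n)^`())`_n = n%:R.
Proof. by rewrite coefXM; case: n => [//|n] /=; rewrite coef_deriv coef_P_diag. Qed.

Lemma L_X_P_sqr n :
  L ('X * (P n * P n)) = (2 * n%:R + 1 + alpha) * h n + t * W * (P n).[t] ^+ 2.
Proof.
have := L_X_deriv (P n * P n).
have -> : 'X * (P n * P n)^`() = P n * ('X * (P n)^`()) + P n * ('X * (P n)^`()).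
  by rewrite derivM; ring.
rewrite LD L_P_mul ?coef_XP_deriv ?size_XM_leq ?size_deriv_P // L_P_mul_P eqxx hornerM.
move=> H; have -> : L ('X * (P n * P n))
  = n%:R * h n + n%:R * h n + (alpha + 1) * h n + t * W * ((P n).[t] * (P n).[t]).
  by rewrite H; ring.
ring.
Qed.

(* [sub_lead j] is the coefficient of [X ^ (j - 1)] in [P j] ([0] for [j = 0]). *)
Definition sub_lead j := ('X * P j)`_j.

Lemma L_X_P_sqr_sub_lead j : L ('X * (P j * P j)) = (sub_lead j - sub_lead j.+1) * h j.
Proof.
rewrite mulrA (mulrC 'X) -mulrA -[_ * P j](subrK (P j.+1)) mulrDr LD L_P_mul_P.
rewrite (ltn_eqF (ltnSn j)) addr0 L_P_mul; first by rewrite coefB /sub_lead (coefXM (P j.+1)).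
apply: size_leq_pred; last by rewrite coefB coefXM /= !coef_P_diag subrr.
apply: leq_trans (size_polyD _ _) _; rewrite geq_max size_polyN size_P leqnn andbT.
by apply: size_XM_leq; rewrite size_P.
Qed.

Hypothesis h_neq0 : forall n, h n != 0.

Lemma sub_lead_sum n : - sub_lead n
  = n%:R ^+ 2 + n%:R * alpha + t * \sum_(j < n) W * (P j).[t] ^+ 2 / h j.
Proof.
elim: n => [|n IH]; first by rewrite /sub_lead coefXM big_ord0 oppr0; ring.
have Hdiff : sub_lead n - sub_lead n.+1
             = 2 * n%:R + 1 + alpha + t * (W * (P n).[t] ^+ 2 / h n).
  by apply: (mulIf (h_neq0 n)); rewrite -L_X_P_sqr_sub_lead L_X_P_sqr; field.
have -> : - sub_lead n.+1 = - sub_lead n + (sub_lead n - sub_lead n.+1) by ring.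
by rewrite IH Hdiff big_ord_recr /= -natr1; ring.
Qed.

Lemma sub_lead_succ_norm m :
  - sub_lead m.+1 * h m = h m.+1 - t * W * ((P m.+1).[t] * (P m).[t]).
Proof.
rewrite /sub_lead coefXM /=.
have := L_X_deriv (P m.+1 * P m).
have -> : L ('X * (P m.+1 * P m)) = h m.+1.
  rewrite mulrCA L_P_mul; last by apply: size_XM_leq; rewrite size_P.
  by rewrite coefXM /= coef_P_diag mul1r.
have -> : 'X * (P m.+1 * P m)^`()
          = P m * ('X * (P m.+1)^`()) + P m.+1 * ('X * (P m)^`()) by rewrite derivM; ring.
rewrite LD (L_P_mul_small (size_XM_leq (size_deriv_P m))) // addr0 mulrC.
set q := 'X * (P m.+1)^`().
rewrite -[q](subrK (m.+1%:R *: P m.+1)) mulrDl LD -scalerAl LZ L_P_mul_P.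
rewrite (gtn_eqF (ltnSn m)) mulr0 addr0 mulrC L_P_mul; last first.
  apply: size_leq_pred; last by rewrite coefB coefZ coef_P_diag mulr1 coef_XP_deriv subrr.
  apply: leq_trans (size_polyD _ _) _; rewrite geq_max size_polyN.
  by rewrite (leq_trans (size_scale_leq _ _)) ?size_P // size_XM_leq ?size_deriv_P.
rewrite mulr0 subr0 hornerM coefB coefZ /q coefXM.
case: m {q} => [|m] /= <-; first by ring.
by rewrite coef_deriv -mulr_natr; ring.
Qed.

Lemma norm_succ_identity m :
  h m.+1 - t * W * ((P m.+1).[t] * (P m).[t])
  = (m.+1%:R ^+ 2 + m.+1%:R * alpha + t * \sum_(j < m.+1) W * (P j).[t] ^+ 2 / h j) * h m.
Proof. by rewrite -sub_lead_succ_norm -sub_lead_sum. Qed.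

(* [N p] is [alpha] times the integral of [p(x) w(x) / x]; the division by [x]
   is visible only on multiples of [X]. *)
Definition N (p : {poly R}) := L p - L p^`() - W * p.[t].

Lemma N_D p q : N (p + q) = N p + N q.
Proof. by rewrite /N derivD !LD hornerD; ring. Qed.

Lemma N_C a p : N (a%:P * p) = a * N p.
Proof. by rewrite /N !mul_polyC derivZ !LZ hornerZ; ring. Qed.

Lemma N_XM q : N ('X * q) = alpha * L q.
Proof.
have := L_X_deriv q.
by rewrite /N derivM derivX mul1r LD hornerM hornerX => ->; ring.
Qed.

Lemma N_P_mul i j : N (P i * P j) = (P i)`_0 * N (P j) + alpha * L (P j * drop_poly 1 (P i)).
Proof.
have Hsplit : P i = ((P i)`_0)%:P + 'X * drop_poly 1 (P i).
  apply/polyP => k; rewrite coefD coefC coefXM.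
  by case: k => [|k] /=; rewrite ?addr0 ?add0r // coef_drop_poly addn1.
by rewrite {1}Hsplit mulrDl -mulrA N_D N_C N_XM (mulrC (drop_poly 1 (P i))).
Qed.

Lemma size_drop_P n : (size (drop_poly 1 (P n)) <= n)%N.
Proof. by rewrite size_drop_poly size_P subn1. Qed.

Lemma N_P_sqr n : N (P n * P n) = h n - W * (P n).[t] ^+ 2.
Proof.
rewrite /N L_P_mul_P eqxx derivM LD hornerM mulrC.
by rewrite (L_P_mul_small (size_deriv_P n)) // add0r mulrC; ring.
Qed.

Lemma N_P_succ_mul m :
  N (P m.+1 * P m) = - (m.+1%:R * h m) - W * ((P m.+1).[t] * (P m).[t]).
Proof.
rewrite /N L_P_mul_P (gtn_eqF (ltnSn m)) derivM LD hornerM (mulrC _ (P m)).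
rewrite (L_P_mul_small (size_deriv_P m)) // addr0 L_P_mul; last exact: leq_trans (size_deriv_P _) _.
by rewrite coef_deriv coef_P_diag; ring.
Qed.

(* Both sides are [N (P m.+1 * P m) * (N (P m.+1 * P m) - alpha * h m)]: each
   factor [N (P i * P j)] splits as [(P i)`_0 * N (P j)] plus a correction
   that survives only for [P m.+1 * P m]. *)
Lemma norm_product_identity m :
  (m.+1%:R * h m + W * ((P m.+1).[t] * (P m).[t]))
  * (m.+1%:R * h m + W * ((P m.+1).[t] * (P m).[t]) + alpha * h m)
  = (h m.+1 - W * (P m.+1).[t] ^+ 2) * (h m - W * (P m).[t] ^+ 2).
Proof.
set x := N (P m.+1 * P m).
have -> : m.+1%:R * h m + W * ((P m.+1).[t] * (P m).[t]) = - x by rewrite /x N_P_succ_mul; ring.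
have Hlow i j : (i <= j)%N -> N (P i * P j) = (P i)`_0 * N (P j).
  by move=> hij; rewrite N_P_mul (L_P_mul_small (size_drop_P i)) // mulr0 addr0.
have -> : - x + alpha * h m = - ((P m.+1)`_0 * N (P m)).
  rewrite /x N_P_mul L_P_mul ?size_drop_P // coef_drop_poly addn1 coef_P_diag; ring.
have Hswap : x = (P m)`_0 * N (P m.+1) by rewrite /x mulrC Hlow.
by rewrite -!N_P_sqr !Hlow // Hswap; ring.
Qed.

End Orthogonality.
End Functional.

Section WeightedIntegrals.
Variables (alpha A B t : R) (c : nat -> nat -> R) (h : nat -> R).
Hypothesis orthonormed_P : orthonormed alpha A B t c h.

Local Notation w := (weight alpha A B t).
Local Notation is_integral f l := (is_RInt_gen f (at_point (0 : R)) (Rbar_locally p_infty) l).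
Local Notation P := (P c).

Lemma lsumE (f : nat -> R) n : lsum f n = \sum_(i < n) f i.
Proof. by elim: n => [|n IH] /=; rewrite ?big_ord0 // big_ord_recr /= IH. Qed.

Lemma horner_P n x : (P n).[x] = Defs.monicP c n x.
Proof.
rewrite /P /Defs.monicP hornerD hornerXn horner_poly lsumE RpowE.
by congr (_ + _); apply: eq_bigr => i _; rewrite RpowE.
Qed.

Lemma is_integral_P j : is_integral (fun x => (P j).[x] * w x) (if Nat.eqb j 0 then h j else 0 : R).
Proof.
eapply is_RInt_gen_ext; last exact (@orthonormed_P j 0%N).
apply: filter_forall => _ x _.
by rewrite horner_P /Defs.monicP /= Rplus_0_r Rmult_1_r.
Qed.

(* Every moment exists, since the [P j] span all polynomials. *)
Lemma ex_integral_poly n (p : {poly R}) : (size p <= n)%N ->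
  exists l, is_integral (fun x => p.[x] * w x) l.
Proof.
elim: n p => [|n IH] p hp.
  move: hp; rewrite size_poly_leq0 => /eqP ->.
  eexists; eapply is_RInt_gen_ext; last exact (is_RInt_gen_scal _ 0 _ (@is_integral_P 0%N)).
  by apply: filter_forall => _ x _; rewrite horner0 /scal /= /mult /= !RmultE !mul0r.
have [l Hl] := IH _ (size_sub_P c hp).
eexists; eapply is_RInt_gen_ext;
  last exact (is_RInt_gen_plus _ _ _ _ (is_RInt_gen_scal _ p`_n _ (@is_integral_P n)) Hl).
apply: filter_forall => _ x _; rewrite /plus /scal /= /mult /= !RmultE RplusE.
by rewrite (hornerD p) hornerN hornerZ; ring.
Qed.

Definition mu k := RInt_gen (fun x => pow x k * w x) (at_point (0 : R)) (Rbar_locally p_infty).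

Lemma is_integral_mu k : is_integral (fun x => pow x k * w x) (mu k).
Proof.
have [l Hl] := @ex_integral_poly k.+1 'X^k (eq_leq (size_polyXn R k)).
have Hex : ex_RInt_gen (fun x => pow x k * w x) (at_point (0 : R)) (Rbar_locally p_infty).
  exists l; eapply is_RInt_gen_ext; last exact Hl.
  by apply: filter_forall => _ x _; rewrite hornerXn RpowE.
exact (RInt_gen_correct (V := R_CompleteNormedModule) _ Hex).
Qed.

Lemma is_integral_L (p : {poly R}) : is_integral (fun x => p.[x] * w x) (L mu p).
Proof.
rewrite /L; eapply is_RInt_gen_ext; first apply: filter_forall => _ x _.
  by rewrite [in RHS]horner_coef mulr_suml.
elim: (size p) => [|n IH].
  rewrite [X in is_RInt_gen _ _ _ X]big_ord0 -[X in is_RInt_gen _ _ _ X](mul0r (mu 0%N)).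
  eapply is_RInt_gen_ext; last exact (is_RInt_gen_scal _ 0 _ (@is_integral_mu 0%N)).
  by apply: filter_forall => _ x _; rewrite big_ord0 /scal /= /mult /= RmultE mul0r.
rewrite big_ord_recr /=.
eapply is_RInt_gen_ext;
  last exact (is_RInt_gen_plus _ _ _ _ IH (is_RInt_gen_scal _ p`_n _ (@is_integral_mu n))).
apply: filter_forall => _ x _; rewrite big_ord_recr /= /plus /scal /= /mult /=.
by rewrite RpowE !RmultE RplusE; ring.
Qed.

Lemma L_mu_P_mul_P n m : L mu (P n * P m) = if n == m then h n else 0.
Proof.
have HP := @orthonormed_P n m.
have HL : is_integral (fun x => Defs.monicP c n x * Defs.monicP c m x * w x)
            (L mu (P n * P m)).
  eapply is_RInt_gen_ext; last exact (@is_integral_L (P n * P m)).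
  by apply: filter_forall => _ x _; rewrite hornerM !horner_P.
rewrite -(is_RInt_gen_unique _ _ HL) (is_RInt_gen_unique _ _ HP).
by case: (Nat.eqb_spec n m) => [->|/eqP/negbTE ->]; rewrite ?eqxx.
Qed.

End WeightedIntegrals.

Section Identities.
Local Open Scope R_scope.
Variables (alpha A B t : R) (c : nat -> nat -> R) (h : nat -> R).
Hypotheses (alpha_gt0 : 0 < alpha) (A_ge0 : 0 <= A) (B_gt0 : 0 < B) (t_gt0 : 0 < t).
Hypothesis orthonormed_P : orthonormed alpha A B t c h.

Lemma norm_gt0 n : 0 < h n.
Proof.
apply: (@sqr_norm_pos alpha A B t c n); [lra|lra|lra|].
by have := @orthonormed_P n n; rewrite Nat.eqb_refl.
Qed.

Lemma norm_identities m :
  h (S m) - t * (B * rpow t alpha * exp (- t)) * (Defs.monicP c (S m) t * Defs.monicP c m t)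
    = (INR (S m) ^ 2 + INR (S m) * alpha + t * lsum (RR_n alpha B t c h) (S m)) * h m /\
  (INR (S m) * h m + B * rpow t alpha * exp (- t) * (Defs.monicP c (S m) t * Defs.monicP c m t))
  * (INR (S m) * h m + B * rpow t alpha * exp (- t) * (Defs.monicP c (S m) t * Defs.monicP c m t)
     + alpha * h m)
    = (h (S m) - B * rpow t alpha * exp (- t) * Defs.monicP c (S m) t ^ 2)
      * (h m - B * rpow t alpha * exp (- t) * Defs.monicP c m t ^ 2).
Proof.
have mu_succ k : (mu alpha A B t k.+1 = (k%:R + alpha + 1) * mu alpha A B t k
                   + B * rpow t alpha * exp (- t) * t ^+ k.+1)%R.
  rewrite -INRE -RpowE; apply: moment_recurrence => //; exact: is_integral_mu.
have h_neq0 n : h n != 0%R by apply/eqP/Rgt_not_eq/norm_gt0.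
have L_P_mul_P := L_mu_P_mul_P orthonormed_P.
have := norm_succ_identity mu_succ L_P_mul_P h_neq0 m.
have := norm_product_identity mu_succ L_P_mul_P m.
rewrite !horner_P => Hprod Hnorm.
split; rewrite ?lsumE /RR_n !RealsE //.
rewrite Hnorm; congr ((_ + t * _) * _).
by apply: eq_bigr => i _; rewrite horner_P RpowE.
Qed.

End Identities.
End MomentFunctional.

Lemma rR_identities (n a t W hn hm pn pm s : R) : 0 < t -> 0 < hn -> 0 < hm ->
  hn - t * W * (pn * pm) = (n ^ 2 + n * a + t * s) * hm ->
  (n * hm + W * (pn * pm)) * (n * hm + W * (pn * pm) + a * hm)
    = (hn - W * pn ^ 2) * (hm - W * pm ^ 2) ->
  let Rn := W * pn ^ 2 / hn in let Rm := W * pm ^ 2 / hm in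
  let r := W * pn * pm / hm in let beta := hn / hm in
  r ^ 2 = beta * Rn * Rm /\
  (n + r) * (n + a + r) = beta * (1 - Rn) * (1 - Rm) /\
  s + r * (1 - a / t - 2 * (n + r) / t) = beta / t * ((1 - Rn) * Rm + (1 - Rm) * Rn).
Proof.
intros Ht Hn Hm Hnorm Hprod Rn Rm r beta.
assert (E1 : r ^ 2 = beta * Rn * Rm) by (unfold r, beta, Rn, Rm; field; lra).
assert (E2 : (n + r) * (n + a + r) = beta * (1 - Rn) * (1 - Rm)).
{ apply (Rmult_eq_reg_l (hm * hm)); [|nra].
  replace (hm * hm * ((n + r) * (n + a + r)))
    with ((n * hm + W * (pn * pm)) * (n * hm + W * (pn * pm) + a * hm))
    by (unfold r; field; lra).
  rewrite Hprod. unfold beta, Rn, Rm. field; lra. }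
split; [exact E1|split; [exact E2|]].
assert (Es : t * s = beta - t * r - n ^ 2 - n * a).
{ apply (Rmult_eq_reg_r hm); [|lra]. unfold beta, r.
  field_simplify; [|lra]. nra. }
apply (Rmult_eq_reg_l t); [|lra].
replace (t * (s + r * (1 - a / t - 2 * (n + r) / t)))
  with (t * s + t * r - r * a - 2 * r * (n + r)) by (field; lra).
replace (t * (beta / t * ((1 - Rn) * Rm + (1 - Rm) * Rn)))
  with (beta * (Rm + Rn) - 2 * (beta * Rn * Rm)) by (field; lra).
rewrite Es, <- E1. nra.
Qed.

Theorem lemma7 (alpha A B t : R) (c : nat -> nat -> R) (h : nat -> R) :
  0 < alpha -> 0 <= A -> 0 < B -> 0 < t ->
  orthonormed alpha A B t c h ->
  forall n : nat, (1 <= n)%nat ->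
    let Rj := RR_n alpha B t c h in
    let r := rr_n alpha B t c h n in
    let beta := betan h n in
    let nn := INR n in
    r ^ 2 = beta * Rj n * Rj (n - 1)%nat /\
    (nn + r) * (nn + alpha + r) = beta * (1 - Rj n) * (1 - Rj (n - 1)%nat) /\
    lsum Rj n + r * (1 - alpha / t - 2 * (nn + r) / t)
      = beta / t * ((1 - Rj n) * Rj (n - 1)%nat + (1 - Rj (n - 1)%nat) * Rj n).
Proof.
intros Ha HA HB Ht Hort [|m] Hm; [lia|]. intros Rj r beta nn.
destruct (MomentFunctional.norm_identities Ha HA HB Ht Hort m) as [Hnorm Hprod].
pose proof (rR_identities (INR (S m)) alpha t (B * rpow t alpha * exp (- t))
  (h (S m)) (h m) (monicP c (S m) t) (monicP c m t) (lsum Rj (S m)) Ht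
  (MomentFunctional.norm_gt0 Ha HA HB Hort (S m)) (MomentFunctional.norm_gt0 Ha HA HB Hort m)
  Hnorm Hprod) as H.
unfold Rj, r, beta, nn, RR_n, rr_n, betan in *.
replace (S m - 1)%nat with m by lia.
exact H.
Qed.
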